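(* Let $(J,W)$ be a graphon with a graphon automorphism $\varphi$, and let $u(t)$ be a trajectory of the Kuramoto graphon system $\dot u_x=\int_J W(x,y)\sin(u_y-u_x)\,d\mu(y)$ on $L^1(J)$ with $\varphi^*(u(0))=u(0)$, where $\varphi^*v=v\circ\varphi$. Let $(W^{(n)})_n$ be graphons on $J$ and $u^{(n)}(t)$ trajectories of $\dot u_x=\int_J W^{(n)}(x,y)\sin(u_y-u_x)\,d\mu(y)$ such that \[ \lim_{n\to\infty}\|W^{(n)}-W\|_{\infty\to1}=0,\qquad\lim_{n\to\infty}\|u^{(n)}(0)-u(0)\|_1=0. \] Then for every $t\in\mathbb{R}$, $\lim_{n\to\infty}\|\varphi^*(u^{(n)}(t))-u^{(n)}(t)\|_1=0$, and the convergence is uniform in $t$ on every compact interval $[-T,T]$.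
   Context: A graphon $(J,W)$ is a probability space $J=(\Omega,\mathcal A,\mu)$ with a symmetric measurable $W:\Omega\times\Omega\to[0,1]$. A graphon automorphism is an invertible measure preserving $\varphi:J\to J$ such that for every $x$ and almost every $y$, $W(\varphi(x),\varphi(y))=W(x,y)$. $\|K\|_{\infty\to1}=\sup_{\|h\|_{L^\infty}\le1}\int_J\big|\int_J K(x,y)h(y)\,d\mu(y)\big|\,d\mu(x)$. *)

From HB Require Import structures.
From mathcomp Require Import all_boot all_order all_algebra.
From mathcomp Require Import all_classical all_reals all_analysis.
Set Implicit Arguments. Unset Strict Implicit. Unset Printing Implicit Defensive.
Import Order.TTheory GRing.Theory Num.Theory.
Import numFieldNormedType.Exports.
Local Open Scope classical_set_scope.
Local Open Scope ring_scope.

Section Graphon.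
Context {R : realType} {d : measure_display} {T : measurableType d}.
Variable mu : probability T R.

Definition is_graphon (W : T * T -> R) : Prop :=
  measurable_fun setT W /\
  (forall x y, W (x, y) = W (y, x)) /\
  (forall x y, 0 <= W (x, y) <= 1).

Definition inv_measure_preserving (phi : T -> T) : Prop :=
  (exists psi : T -> T, cancel phi psi /\ cancel psi phi /\
     measurable_fun setT psi) /\
  measurable_fun setT phi /\
  (forall A, measurable A -> mu (phi @^-1` A) = mu A).

Definition graphon_automorphism (W : T * T -> R) (phi : T -> T) : Prop :=
  inv_measure_preserving phi /\
  (forall x, {ae mu, forall y, W (phi x, phi y) = W (x, y)}).

Definition kuramoto_field (W : T * T -> R) (v : T -> R) : T -> R :=
  fun x => Rintegral mu setT (fun y => W (x, y) * sin (v y - v x)).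

Definition L1dist (f g : T -> R) : \bar R :=
  (\int[mu]_x (`|f x - g x|)%:E)%E.

(* u : R -> L^1(J) is a trajectory (C^1 solution in L^1(J)) of
   du/dt = F_W(u): each u t is integrable and the L^1 difference quotient
   converges to F_W(u t). *)
Definition kuramoto_trajectory (W : T * T -> R) (u : R -> T -> R) : Prop :=
  (forall t, mu.-integrable setT (EFin \o u t)) /\
  (forall t,
     (fun h : R => (\int[mu]_x
        (`|(u (t + h) x - u t x) / h - kuramoto_field W (u t) x|)%:E)%E)
       @ 0^' --> 0%E).

Definition cut_norm_inf1 (K : T * T -> R) : \bar R :=
  ereal_sup [set (\int[mu]_x `| \int[mu]_y (K (x, y) * h y)%:E |)%E
            | h in [set h : T -> R | measurable_fun setT h /\
                                     forall y, `|h y| <= 1]].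

End Graphon.

(* Write [D v] for the invariance defect [|| v \o phi - v ||_1].  Since [phi] preserves [mu]
   and, almost everywhere, [W], the Kuramoto field [F_n] of [W_n] satisfies
     [D (F_n v) <= 2 D v + 4 ||W_n - W||_{oo->1}]:
   after conjugating by [phi] and replacing [W o (phi x phi)] by [W], what remains is the
   1-Lipschitz dependence of the field on [v] and the fields of the error kernels [W_n - W]
   and [(W_n - W) o (phi x phi)]; by the addition formula for the sine, these are kernel
   operators applied to [sin v] and [cos v].  Hence [t |-> D (u_n t)] grows at rate at most
   [2 D + 4 ||W_n - W||_{oo->1}], and a Gronwall argument (by real induction) bounds it on
   [[-T, T]] by a multiple of [D (u_n 0) + ||W_n - W||_{oo->1}], where
   [D (u_n 0) <= 2 ||u_n 0 - u 0||_1] because [u 0] is [phi]-invariant. *)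

From HB Require Import structures.
From mathcomp Require Import all_boot all_order all_algebra.
From mathcomp Require Import all_classical all_reals all_analysis.
From mathcomp Require Import ring lra measurable_realfun.
Set Implicit Arguments. Unset Strict Implicit. Unset Printing Implicit Defensive.
Import Order.TTheory GRing.Theory Num.Theory.
Import numFieldNormedType.Exports.
Local Open Scope classical_set_scope.
Local Open Scope ring_scope.

Lemma real_induction {R : realType} (a b : R) (P : R -> Prop) :
  P a ->
  (forall s, a < s <= b -> (forall r, a <= r < s -> P r) -> P s) ->
  (forall s, a <= s < b -> (forall r, a <= r <= s -> P r) ->
     exists2 h, 0 < h & forall r, s < r < s + h -> P r) ->
  forall r, a <= r <= b -> P r.
Proof.
move=> Pa Pleft Pright.
have [ba|ab] := ltrP b a; first by move=> r /andP[ar rb]; lra.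
pose S := [set s | a <= s <= b /\ forall r, a <= r <= s -> P r].
have Sa : S a.
  split; first by rewrite lexx ab.
  by move=> r ar; have -> : r = a by apply/eqP; rewrite eq_le andbC.
have supS : has_sup S by split; [exists a | exists b => s [/andP[_ ?] _]].
set s := sup S.
have a_s : a <= s := sup_upper_bound supS Sa.
have s_b : s <= b by apply: ge_sup => [|r [/andP[_ ?] _]]; [exists a|].
have below_s r : a <= r < s -> P r.
  move=> /andP[ar rs]; have sr0 : 0 < s - r by rewrite subr_gt0.
  have [e [_ Pe] se] := sup_adherent sr0 supS.
  by apply: Pe; rewrite -/s in se; apply/andP; split; lra.
have Ss : S s.
  split; first by rewrite a_s s_b.
  move=> r /andP[ar rs]; have [rlts|slr] := ltrP r s; first by apply: below_s; rewrite ar.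
  have -> : r = s by apply/eqP; rewrite eq_le rs.
  have [<-//|as_] := eqVneq a s.
  by apply: Pleft => //; rewrite lt_neqAle as_ a_s.
suff sb : s = b by move=> r rab; case: Ss => _; apply; rewrite sb.
apply/eqP; rewrite eq_le s_b leNgt; apply/negP => sltb.
have [h h0 Ph] := Pright s (introT andP (conj a_s sltb)) Ss.2.
pose h' := Num.min (h / 2) (b - s).
have h'0 : 0 < h' by rewrite lt_min divr_gt0 // subr_gt0.
have h'h : h' <= h / 2 by rewrite ge_min lexx.
have h'b : h' <= b - s by rewrite ge_min lexx orbT.
have : S (s + h').
  split; first by apply/andP; split; lra.
  move=> r /andP[ar rsh]; have [rs|sr] := lerP r s.
    by case: Ss => _; apply; rewrite ar.
  by apply: Ph; apply/andP; split; lra.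
by move=> /(sup_upper_bound supS); rewrite -/s; lra.
Qed.

Section growth_barrier.
Context {R : realType}.
Variables (f : R -> R) (K c : R).
Hypothesis f_growth : forall t e, 0 < e -> exists2 eta, 0 < eta &
  forall h, `|h| < eta -> `|f (t + h) - f t| <= `|h| * (K * f t + c + e).

Lemma growth_barrier_left (y : R -> R) (a s : R) : {homo y : r r' / r <= r'} ->
  a < s -> (forall r, a <= r < s -> f r <= y r) -> f s <= y s.
Proof.
move=> y_nd a_s below; apply/ler_addgt0Pr => e e0.
have [eta eta0 Heta] := f_growth s ltr01.
set M := `|K * f s + c| + 1.
have M0 : 0 < M by rewrite /M ltr_pwDr // normr_ge0.
pose dl := Num.min (Num.min (eta / 2) (s - a)) (e / M).
have dl0 : 0 < dl.
  by rewrite /dl !lt_min subr_gt0 a_s andbT; apply/andP; split; apply: divr_gt0.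
have dl_eta : dl <= eta / 2 by rewrite /dl !ge_min lexx.
have dl_s : dl <= s - a by rewrite /dl !ge_min lexx orbT.
have dlM : dl * M <= e by rewrite -ler_pdivlMr // /dl ge_min lexx orbT.
have /Heta : `|- dl| < eta by rewrite normrN (gtr0_norm dl0); lra.
rewrite normrN (gtr0_norm dl0) ler_norml => /andP[+ _].
have /below : a <= s - dl < s by apply/andP; split; lra.
have /y_nd : s - dl <= s by lra.
have : dl * (K * f s + c + 1) <= dl * M.
  by apply: ler_wpM2l; [exact: ltW | rewrite /M lerD2r ler_norm].
lra.
Qed.

Local Notation y s := ((f 0 + 2 * c) * expR ((K + 1) * s)).

(* [y] grows at rate [(K + 1) y >= K f + 2 c] wherever [f <= y], which beats the rate
   [K f + c + e] allowed for [f]: the slack in [2 c] and [K + 1] makes the barrier strict. *)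
Lemma growth_barrier_right s : 0 <= K -> 0 < c -> (forall t, 0 <= f t) ->
  0 <= s -> f s <= y s -> exists2 h, 0 < h & forall r, s < r < s + h -> f r <= y r.
Proof.
move=> K0 c0 f0 s0 fys; have c2 : 0 < c / 2 by rewrite divr_gt0.
have [eta eta0 Heta] := f_growth s c2.
exists eta => // r /andP[sr rse].
have rs0 : 0 < r - s by rewrite subr_gt0.
have /Heta : `|r - s| < eta by rewrite (gtr0_norm rs0); lra.
rewrite (gtr0_norm rs0) subrKC ler_norml => /andP[_ fr].
have y_step : y s * (1 + (K + 1) * (r - s)) <= y r.
  have -> : (K + 1) * r = (K + 1) * s + (K + 1) * (r - s) by ring.
  rewrite expRD mulrA; apply: ler_wpM2l; last exact: expR_ge1Dx.
  by rewrite mulr_ge0 ?expR_ge0 //; have := f0 0; lra.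
have y_ge : f 0 + 2 * c <= y s.
  apply: ler_peMr; first by have := f0 0; lra.
  by rewrite -expR0 ler_expR mulr_ge0 // addr_ge0.
have Kf : K * f s <= K * y s by rewrite ler_wpM2l.
have := f0 0.
have : (r - s) * (K * f s + c + c / 2) <= (r - s) * ((K + 1) * y s).
  by rewrite ler_wpM2l ?subr_ge0 ?ltW //; have := f0 0; lra.
nra.
Qed.

Lemma gronwall_ge0 t : 0 <= K -> 0 < c -> (forall t, 0 <= f t) ->
  0 <= t -> f t <= y t.
Proof.
move=> K0 c0 f0 t0.
apply: (real_induction (a := 0) (b := t) (P := fun r => f r <= y r)); last by rewrite t0 lexx.
- by rewrite mulr0 expR0 mulr1 lerDl mulr_ge0 // ltW.
- move=> s /andP[s0 _]; apply: growth_barrier_left s0 => r r' rr'.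
  apply: ler_wpM2l; first by have := f0 0; lra.
  by rewrite ler_expR ler_wpM2l // addr_ge0.
- move=> s /andP[s0 _] below; apply: growth_barrier_right => //.
  by apply: below; rewrite s0 lexx.
Qed.

End growth_barrier.

Lemma gronwall {R : realType} (f : R -> R) (K c : R) : 0 <= K -> 0 < c ->
  (forall t, 0 <= f t) ->
  (forall t e, 0 < e -> exists2 eta, 0 < eta & forall h, `|h| < eta ->
      `|f (t + h) - f t| <= `|h| * (K * f t + c + e)) ->
  forall t, f t <= (f 0 + 2 * c) * expR ((K + 1) * `|t|).
Proof.
move=> K0 c0 f0 f_growth t.
have [t0|t0] := leP 0 t; first by rewrite ger0_norm //; exact: gronwall_ge0.
have fN_growth s e : 0 < e -> exists2 eta, 0 < eta & forall h, `|h| < eta ->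
    `|f (- (s + h)) - f (- s)| <= `|h| * (K * f (- s) + c + e).
  move=> e0; have [eta eta0 Heta] := f_growth (- s) e e0.
  by exists eta => // h hl; rewrite opprD -(normrN h); apply: Heta; rewrite normrN.
have Nt0 : 0 <= - t by rewrite oppr_ge0 ltW.
have := gronwall_ge0 (f := f \o -%R) fN_growth K0 c0 (fun s => f0 _) Nt0.
by rewrite /= opprK oppr0 ltr0_norm.
Qed.

Section fine_limits.
Context {R : realType}.

Lemma dnbhs0_fine_lt (rho : R -> \bar R) : rho @ 0^' --> 0%E ->
  forall e : R, 0 < e -> exists2 eta : R, 0 < eta &
    forall h : R, `|h| < eta -> h != 0 -> fine (rho h) < e.
Proof.
move=> /fine_cvgP [_ /cvgrPdist_lt rho0] e e0.
move: (rho0 e e0); rewrite near_withinE => /nbhs_ballP [eta eta0 Hb].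
exists eta => // h hl h0.
have := Hb h; rewrite /ball /= sub0r normrN => /(_ hl h0).
by rewrite sub0r normrN => /(le_lt_trans (ler_norm _)).
Qed.

Lemma cvgn0_fine_lt (f : nat -> \bar R) : f @ \oo --> 0%E ->
  forall e : R, 0 < e -> exists N, forall n, (N <= n)%N -> fine (f n) < e.
Proof.
move=> /fine_cvgP [_ /cvgrPdist_lt f0] e e0.
have [N _ HN] := f0 e e0.
exists N => n Nn; have := HN n Nn.
by rewrite sub0r normrN /= => /(le_lt_trans (ler_norm _)).
Qed.

End fine_limits.

Section probability_Rintegral.
Context {R : realType} {d : measure_display} {T : measurableType d}.
Variable mu : probability T R.

Lemma bounded_integrable (f : T -> R) (M : R) : measurable_fun setT f ->
  (forall x, `|f x| <= M) -> mu.-integrable setT (EFin \o f).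
Proof.
move=> mf fM; apply: measurable_bounded_integrable => //.
  by rewrite ltey_eq fin_num_measure.
exists M; split; first exact: num_real.
by move=> M' MM' x _; apply: le_trans (fM x) _; exact: ltW.
Qed.

Lemma integrable_cst (k : R) : mu.-integrable setT (EFin \o (fun _ : T => k)).
Proof. exact: (@bounded_integrable _ `|k|). Qed.

Lemma probability_Rintegral_cst (k : R) : \int[mu]_(_ in setT) k = k.
Proof.
rewrite Rintegral_cst // [fine _](_ : _ = 1) ?mulr1 //.
exact: (f_equal fine (probability_setT mu)).
Qed.

Lemma integrable_measurable_fun (f : T -> R) :
  mu.-integrable setT (EFin \o f) -> measurable_fun setT f.
Proof. by move=> /(measurable_int mu) /measurable_EFinP. Qed.

Lemma integrableD_EFin (f g : T -> R) : mu.-integrable setT (EFin \o f) ->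
  mu.-integrable setT (EFin \o g) -> mu.-integrable setT (EFin \o (fun x => f x + g x)).
Proof. by move=> fi gi; apply: eq_integrable (integrableD measurableT fi gi). Qed.

Lemma integrableB_EFin (f g : T -> R) : mu.-integrable setT (EFin \o f) ->
  mu.-integrable setT (EFin \o g) -> mu.-integrable setT (EFin \o (fun x => f x - g x)).
Proof. by move=> fi gi; apply: eq_integrable (integrableB measurableT fi gi). Qed.

Lemma integrableZl_EFin (k : R) (f : T -> R) : mu.-integrable setT (EFin \o f) ->
  mu.-integrable setT (EFin \o (fun x => k * f x)).
Proof. by move=> fi; apply: eq_integrable (integrableZl measurableT k fi). Qed.

Lemma integrableZr_EFin (k : R) (f : T -> R) : mu.-integrable setT (EFin \o f) ->
  mu.-integrable setT (EFin \o (fun x => f x * k)).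
Proof.
by move=> fi; apply: eq_integrable (integrableZr measurableT k fi) => // x _ /=; rewrite EFinM.
Qed.

Lemma normr_Rintegral_le (f : T -> R) (M : R) : measurable_fun setT f ->
  (forall x, `|f x| <= M) -> `|\int[mu]_y f y| <= M.
Proof.
move=> mf fM; have M0 : 0 <= M by apply: le_trans (fM point).
apply: le_trans (le_normr_Rintegral _ (bounded_integrable mf fM)) _ => //.
rewrite -[leRHS]probability_Rintegral_cst le_Rintegral //.
- apply: (@bounded_integrable _ M); first exact: measurableT_comp.
  by move=> x; rewrite normr_id.
- exact: integrable_cst.
Qed.

Lemma measurable_fun_Rintegral_section (f : T * T -> R) (M : R) :
  measurable_fun setT f -> (forall p, `|f p| <= M) ->
  measurable_fun setT (fun x => \int[mu]_y f (x, y)).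
Proof.
move=> mf fM.
have prod_fin : ((mu \x mu)%E [set: T * T] < +oo)%E.
  rewrite -setXTT product_measure1E // lte_mul_pinfty ?fin_num_measure //.
  by rewrite ltey_eq fin_num_measure.
have fi : (mu \x mu)%E.-integrable setT (EFin \o f).
  apply: measurable_bounded_integrable => //.
  exists M; split; first exact: num_real.
  by move=> M' MM' x _; apply: le_trans (fM x) _; exact: ltW.
exact: (measurableT_comp (fine_measurable measurableT) (measurable_fubini_F fi)).
Qed.

End probability_Rintegral.

Lemma sin_lipschitz {R : realType} (x y : R) : `|sin x - sin y| <= `|x - y|.
Proof.
wlog xy : x y / x < y.
  move=> H; have [/H//|yx|->] := ltgtP x y; last by rewrite !subrr normr0.
  by rewrite distrC (distrC x); exact: H.
have cs : {within `[x, y], continuous (@sin R)}.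
  by apply: continuous_subspaceT; exact: continuous_sin.
have [c _ sinB] := MVT xy (fun c _ => is_derive_sin c) cs.
by rewrite distrC sinB normrM distrC ler_piMl // cos_max.
Qed.

Section kuramoto_field.
Context {R : realType} {d : measure_display} {T : measurableType d}.
Variable mu : probability T R.
Variables (K : T * T -> R) (M : R).
Hypotheses (mK : measurable_fun setT K) (KM : forall p, `|K p| <= M).

Lemma measurable_kuramoto_integrand (v : T -> R) : measurable_fun setT v ->
  measurable_fun setT (fun p => K p * sin (v p.2 - v p.1)).
Proof.
move=> mv; apply: measurable_funM => //.
apply: measurableT_comp; first by apply: continuous_measurable_fun; exact: continuous_sin.
by apply: measurable_funB; apply: measurableT_comp.
Qed.

Lemma kuramoto_integrand_le (v : T -> R) p : `|K p * sin (v p.2 - v p.1)| <= M.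
Proof.
have M0 : 0 <= M by apply: le_trans (KM p).
by rewrite normrM -[M]mulr1 ler_pM // sin_max.
Qed.

Lemma integrable_kuramoto_integrand (v : T -> R) x : measurable_fun setT v ->
  mu.-integrable setT (EFin \o (fun y => K (x, y) * sin (v y - v x))).
Proof.
move=> mv; apply: (@bounded_integrable _ _ _ _ _ M).
  exact: measurable_fun_pair2 x (measurable_kuramoto_integrand mv).
by move=> y; exact: (kuramoto_integrand_le v (x, y)).
Qed.

Lemma measurable_kuramoto_field (v : T -> R) : measurable_fun setT v ->
  measurable_fun setT (kuramoto_field mu K v).
Proof.
move=> mv; apply: (measurable_fun_Rintegral_section _ (measurable_kuramoto_integrand mv)).
exact: kuramoto_integrand_le.
Qed.

Lemma kuramoto_field_le (v : T -> R) x : measurable_fun setT v ->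
  `|kuramoto_field mu K v x| <= M.
Proof.
move=> mv; apply: normr_Rintegral_le.
  exact: measurable_fun_pair2 x (measurable_kuramoto_integrand mv).
by move=> y; exact: (kuramoto_integrand_le v (x, y)).
Qed.

Lemma integrable_kuramoto_field (v : T -> R) : measurable_fun setT v ->
  mu.-integrable setT (EFin \o kuramoto_field mu K v).
Proof.
move=> mv; apply: (bounded_integrable _ (measurable_kuramoto_field mv)).
by move=> x; exact: kuramoto_field_le.
Qed.

Lemma kuramoto_field_lipschitz (v1 v2 : T -> R) x :
  measurable_fun setT v1 -> measurable_fun setT v2 ->
  mu.-integrable setT (EFin \o (fun y => v1 y - v2 y)) ->
  `|kuramoto_field mu K v1 x - kuramoto_field mu K v2 x| <=
  M * (\int[mu]_y `|v1 y - v2 y| + `|v1 x - v2 x|).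
Proof.
move=> mv1 mv2 i12.
have M0 : 0 <= M by apply: le_trans (KM (x, x)).
have i12x : mu.-integrable setT (EFin \o (fun y => `|v1 y - v2 y| + `|v1 x - v2 x|)).
  exact: integrableD_EFin (integrable_norm i12) (integrable_cst _ _).
rewrite /kuramoto_field -RintegralB //; try exact: integrable_kuramoto_integrand.
rewrite -(probability_Rintegral_cst mu `|v1 x - v2 x|) -RintegralD //;
  [|exact: integrable_norm|exact: integrable_cst].
rewrite -RintegralZl //.
apply: le_trans (le_normr_Rintegral _ _) _ => //.
  by apply: integrableB_EFin; exact: integrable_kuramoto_integrand.
apply: le_Rintegral => //.
- apply: integrable_norm; apply: integrableB_EFin; exact: integrable_kuramoto_integrand.
- exact: integrableZl_EFin.
move=> y _; rewrite -mulrBr normrM.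
apply: le_trans (ler_pM _ _ (KM (x, y)) (sin_lipschitz _ _)) _ => //.
rewrite ler_wpM2l // (_ : _ - _ = (v1 y - v2 y) - (v1 x - v2 x)); last by ring.
exact: ler_normB.
Qed.

End kuramoto_field.

Section kuramoto_field_kernels.
Context {R : realType} {d : measure_display} {T : measurableType d}.
Variable mu : probability T R.
Variables (K K' : T * T -> R) (M : R).
Hypotheses (mK : measurable_fun setT K) (KM : forall p, `|K p| <= M).
Hypotheses (mK' : measurable_fun setT K') (K'M : forall p, `|K' p| <= M).

Lemma kuramoto_fieldB (v : T -> R) x : measurable_fun setT v ->
  kuramoto_field mu K v x - kuramoto_field mu K' v x =
  kuramoto_field mu (fun p => K p - K' p) v x.
Proof.
move=> mv; have iK := integrable_kuramoto_integrand mu mK KM x mv.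
have iK' := integrable_kuramoto_integrand mu mK' K'M x mv.
rewrite /kuramoto_field -RintegralB //.
by apply: eq_Rintegral => y _; rewrite mulrBl.
Qed.

Lemma kuramoto_field_ae_eq (v : T -> R) x : measurable_fun setT v ->
  {ae mu, forall y, K (x, y) = K' (x, y)} ->
  kuramoto_field mu K v x = kuramoto_field mu K' v x.
Proof.
move=> mv KK'; rewrite /kuramoto_field /Rintegral; congr fine.
apply: ae_eq_integral => //.
- exact/measurable_EFinP/(measurable_fun_pair2 x (measurable_kuramoto_integrand mK mv)).
- exact/measurable_EFinP/(measurable_fun_pair2 x (measurable_kuramoto_integrand mK' mv)).
by apply: filterS KK' => y /= -> _.
Qed.

End kuramoto_field_kernels.

Section kernel_operator.
Context {R : realType} {d : measure_display} {T : measurableType d}.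
Variable mu : probability T R.

Definition kernel_op (L : T * T -> R) (h : T -> R) (x : T) : R :=
  \int[mu]_y (L (x, y) * h y).

Lemma cut_norm_inf1_ge0 (L : T * T -> R) : (0 <= cut_norm_inf1 mu L)%E.
Proof.
apply: le_trans (ereal_sup_ubound _); last first.
  by exists (fun=> 0); first by split=> // y; rewrite normr0.
by apply: integral_ge0 => x _; exact: abse_ge0.
Qed.

Variables (L : T * T -> R) (M : R).
Hypotheses (mL : measurable_fun setT L) (LM : forall p, `|L p| <= M).

Let measurable_kernel_integrand (h : T -> R) : measurable_fun setT h ->
  measurable_fun setT (fun p => L p * h p.2).
Proof. by move=> mh; apply: measurable_funM => //; exact: measurableT_comp. Qed.

Let kernel_integrand_le (h : T -> R) p : (forall y, `|h y| <= 1) ->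
  `|L p * h p.2| <= M.
Proof.
move=> h1; have M0 : 0 <= M by apply: le_trans (LM p).
by rewrite normrM -[M]mulr1 ler_pM.
Qed.

Let integrable_kernel_integrand (h : T -> R) x : measurable_fun setT h ->
  (forall y, `|h y| <= 1) -> mu.-integrable setT (EFin \o (fun y => L (x, y) * h y)).
Proof.
move=> mh h1.
apply: (bounded_integrable _ (measurable_fun_pair2 x (measurable_kernel_integrand mh))).
by move=> y; exact: (kernel_integrand_le (x, y) h1).
Qed.

Lemma measurable_kernel_op (h : T -> R) : measurable_fun setT h ->
  (forall y, `|h y| <= 1) -> measurable_fun setT (kernel_op L h).
Proof.
move=> mh h1; apply: (measurable_fun_Rintegral_section _ (measurable_kernel_integrand mh)).
by move=> p; exact: kernel_integrand_le.
Qed.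

Lemma kernel_op_le (h : T -> R) x : measurable_fun setT h ->
  (forall y, `|h y| <= 1) -> `|kernel_op L h x| <= M.
Proof.
move=> mh h1.
apply: (normr_Rintegral_le _ (measurable_fun_pair2 x (measurable_kernel_integrand mh))).
by move=> y; exact: (kernel_integrand_le (x, y) h1).
Qed.

Lemma integrable_abs_kernel_op (h : T -> R) : measurable_fun setT h ->
  (forall y, `|h y| <= 1) -> mu.-integrable setT (EFin \o (fun x => `|kernel_op L h x|)).
Proof.
move=> mh h1.
apply: (bounded_integrable _ (measurableT_comp _ (measurable_kernel_op mh h1))) => //.
by move=> x; rewrite normr_id; exact: kernel_op_le.
Qed.

Lemma integral_abse_kernel_op (h : T -> R) : measurable_fun setT h ->
  (forall y, `|h y| <= 1) ->
  (\int[mu]_x `| \int[mu]_y (L (x, y) * h y)%:E |)%E = (\int[mu]_x `|kernel_op L h x|)%:E.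
Proof.
move=> mh h1; rewrite /Rintegral fineK; last first.
  exact: integrable_fin_num (integrable_abs_kernel_op mh h1).
apply: eq_integral => x _; rewrite /kernel_op /Rintegral -abse_EFin fineK //.
exact: integrable_fin_num (integrable_kernel_integrand x mh h1).
Qed.

Lemma cut_norm_inf1_fin_num : cut_norm_inf1 mu L \is a fin_num.
Proof.
rewrite ge0_fin_numE ?cut_norm_inf1_ge0 //; apply: le_lt_trans (ltry M).
apply: ge_ereal_sup => _ [h [mh h1] <-].
rewrite (integral_abse_kernel_op mh h1) lee_fin.
rewrite -[leRHS](probability_Rintegral_cst mu) le_Rintegral //.
- exact: integrable_abs_kernel_op.
- exact: integrable_cst.
- by move=> x _; exact: kernel_op_le.
Qed.

Lemma kernel_op_le_cut_norm (h : T -> R) : measurable_fun setT h ->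
  (forall y, `|h y| <= 1) ->
  \int[mu]_x `|kernel_op L h x| <= fine (cut_norm_inf1 mu L).
Proof.
move=> mh h1; rewrite -lee_fin (fineK cut_norm_inf1_fin_num).
by rewrite -integral_abse_kernel_op //; apply: ereal_sup_ubound; exists h.
Qed.

Lemma kuramoto_field_L1_le (v : T -> R) (C : R) : measurable_fun setT v ->
  (forall h : T -> R, measurable_fun setT h -> (forall y, `|h y| <= 1) ->
     \int[mu]_x `|kernel_op L h x| <= C) ->
  \int[mu]_x `|kuramoto_field mu L v x| <= 2 * C.
Proof.
(* By [sinB], [F_L v] is a combination of [kernel_op L] applied to [sin \o v] and [cos \o v],
   with coefficients bounded by 1. *)
move=> mv opC.
have msv : measurable_fun setT (sin \o v).
  by apply: measurableT_comp => //; apply: continuous_measurable_fun; exact: continuous_sin.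
have mcv : measurable_fun setT (cos \o v).
  by apply: measurableT_comp => //; apply: continuous_measurable_fun; exact: continuous_cos.
have sv1 y : `|(sin \o v) y| <= 1 by exact: sin_max.
have cv1 y : `|(cos \o v) y| <= 1 by exact: cos_max.
have field_sinB x : kuramoto_field mu L v x =
    kernel_op L (sin \o v) x * cos (v x) - kernel_op L (cos \o v) x * sin (v x).
  rewrite /kuramoto_field /kernel_op -!RintegralZr //; try exact: integrable_kernel_integrand.
  rewrite -RintegralB //; try exact/integrableZr_EFin/integrable_kernel_integrand.
  by apply: eq_Rintegral => y _ /=; rewrite sinB; ring.
have iSs := integrable_abs_kernel_op msv sv1.
have iSc := integrable_abs_kernel_op mcv cv1.
apply: (@le_trans _ _
    (\int[mu]_x (`|kernel_op L (sin \o v) x| + `|kernel_op L (cos \o v) x|))).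
  apply: le_Rintegral => //.
  - exact/integrable_norm/(integrable_kuramoto_field mu mL LM mv).
  - exact: integrableD_EFin.
  move=> x _; rewrite field_sinB; apply: le_trans (ler_normB _ _) _.
  by rewrite !normrM lerD // ler_piMr // ?cos_max ?sin_max.
by rewrite RintegralD // mulr2n mulrDl mul1r lerD // opC.
Qed.

End kernel_operator.

Section measure_preserving.
Context {R : realType} {d : measure_display} {T : measurableType d}.
Variable mu : probability T R.
Variable phi : T -> T.
Hypotheses (mphi : measurable_fun setT phi)
  (phi_mp : forall A, measurable A -> mu (phi @^-1` A) = mu A).

Let pushforward_phi (g : T -> \bar R) :
  (\int[mu]_x g x = \int[pushforward mu phi]_x g x)%E.
Proof. by apply: eq_measure_integral => A mA _; exact: (esym (phi_mp mA)). Qed.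

Lemma ge0_integral_comp (g : T -> \bar R) : measurable_fun setT g ->
  (forall x, 0 <= g x)%E -> (\int[mu]_x g (phi x) = \int[mu]_x g x)%E.
Proof.
by move=> mg g0; rewrite [RHS]pushforward_phi ge0_integral_pushforward // preimage_setT.
Qed.

Lemma integrable_comp (g : T -> R) : mu.-integrable setT (EFin \o g) ->
  mu.-integrable setT (EFin \o (fun x => g (phi x))).
Proof.
move=> ig; have mg := measurable_int mu ig.
apply/integrableP; split; first exact: (measurableT_comp mg mphi).
rewrite (ge0_integral_comp (g := fun x => `|(EFin \o g) x|)%E) //.
- by case/integrableP: ig.
- exact: measurableT_comp.
Qed.

Lemma Rintegral_comp (g : T -> R) : mu.-integrable setT (EFin \o g) ->
  \int[mu]_x g (phi x) = \int[mu]_x g x.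
Proof.
move=> ig; rewrite /Rintegral [in RHS]pushforward_phi integral_pushforward //.
- exact: measurable_int ig.
- by rewrite preimage_setT; exact: integrable_comp.
Qed.

Lemma measurable_kernel_comp (K : T * T -> R) : measurable_fun setT K ->
  measurable_fun setT (fun p => K (phi p.1, phi p.2)).
Proof.
move=> mK; apply: (measurableT_comp mK); apply: measurable_fun_pair.
  by apply: measurableT_comp => //; exact: measurable_fst.
by apply: measurableT_comp => //; exact: measurable_snd.
Qed.

Lemma kuramoto_field_comp (K : T * T -> R) (M : R) (v : T -> R) x :
  measurable_fun setT K -> (forall p, `|K p| <= M) -> measurable_fun setT v ->
  kuramoto_field mu K v (phi x) =
  kuramoto_field mu (fun p => K (phi p.1, phi p.2)) (fun y => v (phi y)) x.
Proof.
move=> mK KM mv; rewrite /kuramoto_field -Rintegral_comp //.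
exact: integrable_kuramoto_integrand.
Qed.

Lemma kernel_op_comp_le_cut_norm (psi : T -> T) (L : T * T -> R) (M : R) (h : T -> R) :
  measurable_fun setT psi -> cancel phi psi ->
  measurable_fun setT L -> (forall p, `|L p| <= M) ->
  measurable_fun setT h -> (forall y, `|h y| <= 1) ->
  \int[mu]_x `|kernel_op mu (fun p => L (phi p.1, phi p.2)) h x| <=
  fine (cut_norm_inf1 mu L).
Proof.
move=> mpsi phiK mL LM mh h1.
have mhpsi : measurable_fun setT (h \o psi) by exact: measurableT_comp.
have hpsi1 y : `|(h \o psi) y| <= 1 by exact: h1.
(* Substituting [y = phi y'] turns the conjugated kernel into [L] acting on [h \o psi]. *)
have op_comp x : kernel_op mu (fun p => L (phi p.1, phi p.2)) h x =
    kernel_op mu L (h \o psi) (phi x).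
  rewrite /kernel_op -[RHS]Rintegral_comp /=; last first.
    have mLh : measurable_fun setT (fun p => L p * (h \o psi) p.2).
      by apply: measurable_funM => //; exact: measurableT_comp.
    apply: (bounded_integrable (M := M) _ (measurable_fun_pair2 (phi x) mLh)) => y.
    have M0 : 0 <= M by apply: le_trans (LM (x, x)).
    by rewrite normrM -[M]mulr1 ler_pM.
  by apply: eq_Rintegral => y _; rewrite phiK.
under eq_Rintegral do rewrite op_comp.
rewrite (Rintegral_comp (g := fun x => `|kernel_op mu L (h \o psi) x|)).
  exact: kernel_op_le_cut_norm.
exact: integrable_abs_kernel_op.
Qed.

Definition invariance_defect (v : T -> R) : R := \int[mu]_x `|v (phi x) - v x|.

Lemma invariance_defect_ge0 (v : T -> R) : 0 <= invariance_defect v.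
Proof. by apply: Rintegral_ge0 => x _; exact: normr_ge0. Qed.

Lemma integrable_invariance_defect (v : T -> R) : mu.-integrable setT (EFin \o v) ->
  mu.-integrable setT (EFin \o (fun x => `|v (phi x) - v x|)).
Proof.
by move=> iv; apply/integrable_norm/integrableB_EFin => //; exact: integrable_comp.
Qed.

Lemma L1dist_comp (v : T -> R) : mu.-integrable setT (EFin \o v) ->
  L1dist mu (v \o phi) v = (invariance_defect v)%:E.
Proof.
move=> iv; rewrite /L1dist /invariance_defect /Rintegral fineK //.
exact/integrable_fin_num/integrable_invariance_defect.
Qed.

Lemma invariance_defect_le (v u : T -> R) : mu.-integrable setT (EFin \o v) ->
  mu.-integrable setT (EFin \o u) -> {ae mu, forall x, u (phi x) = u x} ->
  invariance_defect v <= 2 * \int[mu]_x `|v x - u x|.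
Proof.
move=> iv iu u_inv.
have ivu := integrable_norm (integrableB_EFin iv iu).
have ivu_phi : mu.-integrable setT (EFin \o (fun x => `|v (phi x) - u (phi x)|)).
  exact: (integrable_comp ivu).
have u_defect0 : invariance_defect u = 0.
  rewrite /invariance_defect /Rintegral (ae_eq_integral (cst 0%E)) ?integral0 //.
  - exact/measurable_int/integrable_invariance_defect.
  by apply: filterS u_inv => x /= ->; rewrite subrr normr0.
rewrite mulr2n mulrDl mul1r -[X in X + _](Rintegral_comp ivu).
rewrite -[X in _ <= X + _]addr0 -u_defect0 -!RintegralD //;
  last exact: integrable_invariance_defect.
- apply: le_Rintegral => //.
  + exact: integrable_invariance_defect.
  + apply: integrableD_EFin => //; apply: integrableD_EFin => //.
    exact: integrable_invariance_defect.
  move=> x _; rewrite (_ : v (phi x) - v x =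
    (v (phi x) - u (phi x)) + (u (phi x) - u x) - (v x - u x)); last by ring.
  by apply: le_trans (ler_normB _ _) _; rewrite lerD2r ler_normD.
- by apply: integrableD_EFin => //; exact: integrable_invariance_defect.
Qed.

Lemma invariance_defect_perturb (v F r : T -> R) (h : R) :
  mu.-integrable setT (EFin \o v) -> mu.-integrable setT (EFin \o F) ->
  mu.-integrable setT (EFin \o r) ->
  `|invariance_defect (fun x => v x + h * (F x + r x)) - invariance_defect v| <=
  `|h| * (invariance_defect F + 2 * \int[mu]_x `|r x|).
Proof.
move=> iv iF ir.
have iw : mu.-integrable setT (EFin \o (fun x => v x + h * (F x + r x))).
  by apply: integrableD_EFin => //; apply: integrableZl_EFin; exact: integrableD_EFin.
have ir_phi := integrable_comp (integrable_norm ir).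
have ibound : mu.-integrable setT
    (EFin \o (fun x => `|F (phi x) - F x| + (`|r (phi x)| + `|r x|))).
  exact: integrableD_EFin (integrable_invariance_defect iF)
    (integrableD_EFin ir_phi (integrable_norm ir)).
rewrite /invariance_defect -RintegralB //; try exact: integrable_invariance_defect.
apply: le_trans (le_normr_Rintegral _ _) _ => //.
  by apply: integrableB_EFin; exact: integrable_invariance_defect.
rewrite mulr2n mulrDl mul1r -[X in _ + (X + _)](Rintegral_comp (integrable_norm ir)).
rewrite -!RintegralD //; [|exact: integrable_invariance_defect
  |exact: integrableD_EFin ir_phi (integrable_norm ir)|exact: integrable_norm].
rewrite -RintegralZl //; apply: le_Rintegral => //.
- apply/integrable_norm/integrableB_EFin; exact: integrable_invariance_defect.
- exact: integrableZl_EFin.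
move=> x _; apply: le_trans (ler_dist_dist _ _) _.
rewrite (_ : _ - _ = h * ((F (phi x) - F x) + (r (phi x) - r x))); last by ring.
rewrite normrM; apply: ler_wpM2l => //.
by apply: le_trans (ler_normD _ _) _; rewrite lerD2l ler_normB.
Qed.

End measure_preserving.

Section kuramoto_defect.
Context {R : realType} {d : measure_display} {T : measurableType d}.
Variable mu : probability T R.
Variables (phi psi : T -> T).
Hypotheses (mphi : measurable_fun setT phi)
  (phi_mp : forall A, measurable A -> mu (phi @^-1` A) = mu A)
  (mpsi : measurable_fun setT psi) (phiK : cancel phi psi).
Variables (K W : T * T -> R).
Hypotheses (mK : measurable_fun setT K) (K1 : forall p, `|K p| <= 1)
  (mW : measurable_fun setT W) (W1 : forall p, `|W p| <= 1)
  (W_inv : forall x, {ae mu, forall y, W (phi x, phi y) = W (x, y)}).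

Local Notation D := (invariance_defect mu phi).
Local Notation L := (fun p => K p - W p).
Local Notation kphi J := (fun p => J (phi p.1, phi p.2)).
Local Notation C := (fine (cut_norm_inf1 mu L)).

Let mL : measurable_fun setT L. Proof. exact: measurable_funB. Qed.

Let L2 p : `|K p - W p| <= 2.
Proof. by apply: le_trans (ler_normB _ _) _; rewrite -[2]/(1 + 1) lerD. Qed.

Lemma kuramoto_field_comp_sub_le (a : T -> R) x : mu.-integrable setT (EFin \o a) ->
  `|kuramoto_field mu K a (phi x) - kuramoto_field mu K a x| <=
  (D a + `|a (phi x) - a x|) +
  (`|kuramoto_field mu (kphi L) a x| + `|kuramoto_field mu L a x|).
Proof.
move=> ia; have ma := integrable_measurable_fun ia.
have maphi : measurable_fun setT (fun y => a (phi y)) by exact: measurableT_comp.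
have mKphi := measurable_kernel_comp mphi mK.
have mWphi := measurable_kernel_comp mphi mW.
have K1phi p : `|kphi K p| <= 1 := K1 _.
have W1phi p : `|kphi W p| <= 1 := W1 _.
(* Compare [F_K] with the conjugated field [F_{K o phi}]: they differ by the fields of the
   error kernels [L] and [L o phi], since [W o phi = W] almost everywhere. *)
rewrite (kuramoto_field_comp mphi phi_mp x mK K1 ma).
set Fphi := kuramoto_field mu (kphi K).
rewrite (_ : Fphi _ x - _ = (Fphi (fun y => a (phi y)) x - Fphi a x) +
    (Fphi a x - kuramoto_field mu (kphi W) a x) -
    (kuramoto_field mu K a x - kuramoto_field mu (kphi W) a x)); last by ring.
rewrite /Fphi (kuramoto_fieldB mu mKphi K1phi mWphi W1phi x ma).
rewrite (kuramoto_field_ae_eq mWphi mW ma (W_inv x)).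
rewrite (kuramoto_fieldB mu mK K1 mW W1 x ma).
apply: le_trans (ler_normB _ _) _; rewrite addrA lerD2r.
apply: le_trans (ler_normD _ _) _; rewrite lerD2r.
rewrite -[leRHS]mul1r; apply: (kuramoto_field_lipschitz mKphi K1phi) => //.
exact: integrableB_EFin (integrable_comp mphi phi_mp ia) ia.
Qed.

Lemma kuramoto_field_defect_le (a : T -> R) : mu.-integrable setT (EFin \o a) ->
  D (kuramoto_field mu K a) <= 2 * D a + 4 * C.
Proof.
move=> ia; have ma := integrable_measurable_fun ia.
have mLphi := measurable_kernel_comp mphi mL.
have iF := integrable_kuramoto_field mu mK K1 ma.
have iFL := integrable_norm (integrable_kuramoto_field mu mL L2 ma).
have iFLphi := integrable_norm (integrable_kuramoto_field mu mLphi (fun p => L2 _) ma).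
have FLphi_le : \int[mu]_x `|kuramoto_field mu (kphi L) a x| <= 2 * C.
  apply: (kuramoto_field_L1_le mLphi (fun p => L2 _) ma) => h mh h1.
  exact/(kernel_op_comp_le_cut_norm mphi phi_mp mpsi phiK mL L2).
have FL_le : \int[mu]_x `|kuramoto_field mu L a x| <= 2 * C.
  apply: (kuramoto_field_L1_le mL L2 ma) => h mh h1.
  exact/(kernel_op_le_cut_norm mu mL L2).
have iDa := integrable_invariance_defect mphi phi_mp ia.
apply: le_trans (le_Rintegral _ _ _ (fun x _ => kuramoto_field_comp_sub_le x ia)) _ => //.
- exact: integrable_invariance_defect.
- by apply: integrableD_EFin; apply: integrableD_EFin => //; exact: integrable_cst.
rewrite RintegralD //;
  [|exact: integrableD_EFin (integrable_cst _ _) iDa|exact: integrableD_EFin].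
rewrite !RintegralD //; last exact: integrable_cst.
rewrite probability_Rintegral_cst -/(D a).
lra.
Qed.

Lemma invariance_defect_growth (a : R -> T -> R) : kuramoto_trajectory mu K a ->
  forall t e, 0 < e -> exists2 eta, 0 < eta & forall h, `|h| < eta ->
    `|D (a (t + h)) - D (a t)| <= `|h| * (2 * D (a t) + 4 * C + e).
Proof.
move=> [ia a_deriv] t e e0.
have iF := integrable_kuramoto_field mu mK K1 (integrable_measurable_fun (ia t)).
set F := kuramoto_field mu K (a t) in iF *.
have e2 : 0 < e / 2 by rewrite divr_gt0.
have [eta eta0 Heta] := dnbhs0_fine_lt (a_deriv t) e2.
exists eta => // h hl.
have [->|h0] := eqVneq h 0; first by rewrite addr0 subrr !normr0 mul0r.
pose r x := (a (t + h) x - a t x) / h - F x.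
have ir : mu.-integrable setT (EFin \o r).
  by apply: integrableB_EFin => //; apply: integrableZr_EFin; exact: integrableB_EFin.
have r_small : \int[mu]_x `|r x| < e / 2 by exact: Heta h hl h0.
have -> : a (t + h) = fun x => a t x + h * (F x + r x).
  by apply: funext => x; rewrite /r; field.
apply: le_trans (invariance_defect_perturb mphi phi_mp h (ia t) iF ir) _.
apply: ler_wpM2l => //.
have := kuramoto_field_defect_le (ia t); rewrite -/F.
lra.
Qed.

Lemma invariance_defect_bound (a : R -> T -> R) (delta : R) : 0 < delta ->
  kuramoto_trajectory mu K a ->
  forall t, D (a t) <= (D (a 0) + 8 * C + 2 * delta) * expR (3 * `|t|).
Proof.
move=> delta0 traj t.
have C0 : 0 <= C by rewrite fine_ge0 // cut_norm_inf1_ge0.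
have c0 : 0 < 4 * C + delta by lra.
have growth s e : 0 < e -> exists2 eta, 0 < eta & forall h, `|h| < eta ->
    `|D (a (s + h)) - D (a s)| <= `|h| * (2 * D (a s) + (4 * C + delta) + e).
  move=> e0; have [eta eta0 Heta] := invariance_defect_growth traj s e0.
  exists eta => // h /Heta /le_trans; apply.
  by rewrite ler_wpM2l // lerD2r addrA lerDl ltW.
have := gronwall (f := fun s => D (a s)) (ler0n _ 2) c0
  (fun s => invariance_defect_ge0 _ _ _) growth t.
rewrite (_ : 2 + 1 = 3 :> R); last by lra.
by move=> /le_trans; apply; rewrite ler_wpM2r ?expR_ge0 //; lra.
Qed.

End kuramoto_defect.

Lemma graphon_le1 {R : realType} {d : measure_display} {T : measurableType d}
  (W : T * T -> R) : is_graphon W -> forall p, `|W p| <= 1.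
Proof. by move=> [_ [_ W01]] [x y]; have /andP[W0 W1] := W01 x y; rewrite ger0_norm. Qed.

Section kuramoto_approximation.
Context {R : realType} {d : measure_display} {T : measurableType d}.
Variable mu : probability T R.
Variables (phi psi : T -> T).
Hypotheses (mphi : measurable_fun setT phi)
  (phi_mp : forall A, measurable A -> mu (phi @^-1` A) = mu A)
  (mpsi : measurable_fun setT psi) (phiK : cancel phi psi).
Variables (W : T * T -> R) (u0 : T -> R).
Hypotheses (mW : measurable_fun setT W) (W1 : forall p, `|W p| <= 1)
  (W_inv : forall x, {ae mu, forall y, W (phi x, phi y) = W (x, y)})
  (iu0 : mu.-integrable setT (EFin \o u0)) (u0_inv : {ae mu, forall x, u0 (phi x) = u0 x}).
Variables (Wn : nat -> T * T -> R) (un : nat -> R -> T -> R).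
Hypotheses (mWn : forall n, measurable_fun setT (Wn n)) (Wn1 : forall n p, `|Wn n p| <= 1)
  (un_traj : forall n, kuramoto_trajectory mu (Wn n) (un n))
  (Wn_cvg : (fun n => cut_norm_inf1 mu (fun p => Wn n p - W p)) @ \oo --> 0%E)
  (un0_cvg : (fun n => L1dist mu (un n 0) u0) @ \oo --> 0%E).

Lemma invariance_defect_cvg_uniform (Tm eps : R) : 0 < eps ->
  exists N, forall n, (N <= n)%N -> forall t, -Tm <= t <= Tm ->
    invariance_defect mu phi (un n t) < eps.
Proof.
move=> eps0; pose E := expR (3 * Tm).
have E0 : 0 < E := expR_gt0 _.
pose dl := eps / (24 * E).
have dl0 : 0 < dl by rewrite divr_gt0 // mulr_gt0.
have [N1 un0_close] := cvgn0_fine_lt un0_cvg dl0.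
have [N2 Wn_close] := cvgn0_fine_lt Wn_cvg dl0.
exists (maxn N1 N2) => n; rewrite geq_max => /andP[n1 n2] t /andP[t1 t2].
have [iun _] := un_traj n.
have E_n : \int[mu]_x `|un n 0 x - u0 x| < dl := un0_close n n1.
have := Wn_close n n2; have := cut_norm_inf1_ge0 mu (fun p => Wn n p - W p).
set C := cut_norm_inf1 _ _ => C0 C_n; have {}C0 : 0 <= fine C by rewrite fine_ge0.
have D0 := invariance_defect_le mphi phi_mp (iun 0) iu0 u0_inv.
have Et : expR (3 * `|t|) <= E by rewrite ler_expR ler_pM2l // ler_norml t1 t2.
have X0 : 0 <= invariance_defect mu phi (un n 0) + 8 * fine C + 2 * dl.
  by have := invariance_defect_ge0 mu phi (un n 0); lra.
apply: le_lt_trans (invariance_defect_bound mphi phi_mp mpsi phiK (mWn n) (Wn1 n)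
  mW W1 W_inv dl0 (un_traj n) t) _.
apply: le_lt_trans (ler_pM X0 (expR_ge0 _) (lexx _) Et) _.
have X_le : invariance_defect mu phi (un n 0) + 8 * fine C + 2 * dl <= 12 * dl by lra.
apply: le_lt_trans (ler_pM X0 (ltW E0) X_le (lexx _)) _.
rewrite (_ : 12 * dl * E = eps / 2); first by lra.
by rewrite /dl; field; rewrite gt_eqF.
Qed.

End kuramoto_approximation.

Unset Implicit Arguments.

Theorem corollary6p3 (R : realType) (d : measure_display) (T : measurableType d)
  (mu : probability T R) (W : T * T -> R) (phi : T -> T) (u : R -> T -> R)
  (Wn : nat -> T * T -> R) (un : nat -> R -> T -> R) :
  is_graphon W ->
  graphon_automorphism mu W phi ->
  kuramoto_trajectory mu W u ->
  {ae mu, forall x, u 0 (phi x) = u 0 x} ->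
  (forall n, is_graphon (Wn n)) ->
  (forall n, kuramoto_trajectory mu (Wn n) (un n)) ->
  (fun n => cut_norm_inf1 mu (fun p => Wn n p - W p)) @ \oo --> 0%E ->
  (fun n => L1dist mu (un n 0) (u 0)) @ \oo --> 0%E ->
  (forall t : R,
     (fun n => L1dist mu (un n t \o phi) (un n t)) @ \oo --> 0%E) /\
  (forall Tm : R, forall eps : R, 0 < eps ->
     exists N : nat, forall n, (N <= n)%N -> forall t : R, -Tm <= t <= Tm ->
       (L1dist mu (un n t \o phi) (un n t) < eps%:E)%E).
Proof.
move=> W_graphon [[[psi [phiK [_ mpsi]]] [mphi phi_mp]] W_inv] [iu _] u0_inv
  Wn_graphon un_traj Wn_cvg un0_cvg.
have mW : measurable_fun setT W by case: W_graphon.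
have mWn n : measurable_fun setT (Wn n) by case: (Wn_graphon n).
have uniform := invariance_defect_cvg_uniform mphi phi_mp mpsi phiK mW
  (graphon_le1 W_graphon) W_inv (iu 0) u0_inv mWn
  (fun n => graphon_le1 (Wn_graphon n)) un_traj Wn_cvg un0_cvg.
have L1E n t : L1dist mu (un n t \o phi) (un n t) = (invariance_defect mu phi (un n t))%:E.
  by have [iun _] := un_traj n; rewrite (L1dist_comp mphi phi_mp (iun t)).
split => [t|Tm eps eps0].
- rewrite (funext (fun n => L1E n t)); apply/fine_cvgP; split; first exact: nearW.
  apply/cvgrPdist_lt => e e0; have [N HN] := uniform `|t| e e0.
  exists N => // n /= Nn; rewrite sub0r normrN ger0_norm ?invariance_defect_ge0 //.
  by apply: HN => //; rewrite -ler_norml.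
- have [N HN] := uniform Tm eps eps0.
  by exists N => n Nn t Ht; rewrite L1E lte_fin; exact: HN.
Qed.
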